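(* Let $K\in\{\mathbb R,\mathbb C,\mathbb H\}$ and let $(E,d)$ be a metric vector space over $K$ such that $d$ is asymptotically multiplicative, unbounded on every non-trivial linear subspace, and such that for every $C_1>1$ there exists $C_0\ge0$ with $d\big(\sum_{i=1}^n x_i,\sum_{i=1}^n y_i\big)\le C_1\sum_{i=1}^n d(x_i,y_i)+nC_0$ for all $n\ge2$ and $x_1,\dots,x_n,y_1,\dots,y_n\in E$. Let $d_0(x,y)=\int_{\mathbb U}d(ux,uy)\,d\mu(u)$. Then for all $x,y\in E$ the limit $\lim_{n\to+\infty}\frac1n d_0(nx,ny)$ exists.
   Context: A metric vector space is a topological vector space over $K$ whose topology is generated by the metric $d$. $\mathbb U=\{u\in K:|u|=1\}$, $\mu$ the right-invariant Haar probability measure on $\mathbb U$. $d$ is asymptotically multiplicative if for every $C_1>1$ there exist $C_2,C_3\ge0$ with $C_1^{-1}|\lambda|d(x,y)-C_2|\lambda|-C_3\le d(\lambda x,\lambda y)\le C_1|\lambda|d(x,y)+C_2|\lambda|+C_3$ for all $\lambda\in K$, $x,y\in E$. *)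

From mathcomp Require Import all_boot all_order all_algebra all_classical all_reals all_analysis.
Import Order.TTheory GRing.Theory Num.Theory numFieldNormedType.Exports.
Set Implicit Arguments. Unset Strict Implicit. Unset Printing Implicit Defensive.
Local Open Scope ring_scope.
Local Open Scope classical_set_scope.

(** A quaternion a0 + a1 i + a2 j + a3 k is represented as ((a0,a1),(a2,a3)),
    i.e. as an element of R^4 = (R*R)*(R*R); this type carries the product
    (= Borel) sigma-algebra of R^4 from MathComp-Analysis. R and C are the
    real subalgebras {a1=a2=a3=0} and {a2=a3=0}. *)
Definition quat (R : realType) := ((R * R) * (R * R))%type.

Section Quat.
Variable R : realType.
Implicit Types a b : quat R.

Definition Q (a0 a1 a2 a3 : R) : quat R := ((a0, a1), (a2, a3)).
Definition qc0 a := a.1.1.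
Definition qc1 a := a.1.2.
Definition qc2 a := a.2.1.
Definition qc3 a := a.2.2.

Definition qadd a b := Q (qc0 a + qc0 b) (qc1 a + qc1 b) (qc2 a + qc2 b) (qc3 a + qc3 b).
Definition qsub a b := Q (qc0 a - qc0 b) (qc1 a - qc1 b) (qc2 a - qc2 b) (qc3 a - qc3 b).
Definition qmul a b :=
  Q (qc0 a * qc0 b - qc1 a * qc1 b - qc2 a * qc2 b - qc3 a * qc3 b)
    (qc0 a * qc1 b + qc1 a * qc0 b + qc2 a * qc3 b - qc3 a * qc2 b)
    (qc0 a * qc2 b - qc1 a * qc3 b + qc2 a * qc0 b + qc3 a * qc1 b)
    (qc0 a * qc3 b + qc1 a * qc2 b - qc2 a * qc1 b + qc3 a * qc0 b).
Definition qreal (r : R) : quat R := Q r 0 0 0.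
Definition qone : quat R := qreal 1.
Definition qnorm a : R :=
  Num.sqrt (qc0 a ^+ 2 + qc1 a ^+ 2 + qc2 a ^+ 2 + qc3 a ^+ 2).
End Quat.

Inductive Kind := KR | KC | KH.

Definition inK (R : realType) (k : Kind) (a : quat R) : Prop :=
  match k with
  | KR => qc1 a = 0 /\ qc2 a = 0 /\ qc3 a = 0
  | KC => qc2 a = 0 /\ qc3 a = 0
  | KH => True
  end.

Definition Uset (R : realType) (k : Kind) : set (quat R) :=
  [set u | inK k u /\ qnorm u = 1].

(** mu is the right-invariant Haar probability measure on U
    (viewed as a Borel measure on H = R^4 concentrated on U). *)
Definition is_Haar_U (R : realType) (k : Kind)
    (mu : {measure set (quat R) -> \bar R}) : Prop :=
  [/\ mu setT = 1%E, mu (Uset k) = 1%E &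
      forall u, Uset k u -> forall A, measurable A ->
        mu [set v | A (qmul v u)] = mu A].

Section MetricVS.
Variables (R : realType) (k : Kind) (E : zmodType).
(** sm is the (left) scalar multiplication K x E -> E; only its values on
    scalars in K are relevant. *)
Variables (sm : quat R -> E -> E) (d : E -> E -> R).

Definition is_metric : Prop :=
  [/\ forall x y, d x y = 0 <-> x = y,
      forall x y, d x y = d y x &
      forall x y z, d x z <= d x y + d y z].

Definition is_K_vector_space : Prop :=
  [/\ forall a x y, inK k a -> sm a (x + y) = sm a x + sm a y,
      forall a b x, inK k a -> inK k b -> sm (qadd a b) x = sm a x + sm b x,
      forall a b x, inK k a -> inK k b -> sm (qmul a b) x = sm a (sm b x) &
      forall x, sm (qone R) x = x].

Definition add_continuous : Prop :=
  forall x0 y0 (eps : R), 0 < eps -> exists2 delta : R, 0 < delta &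
    forall x y, d x x0 < delta -> d y y0 < delta -> d (x + y) (x0 + y0) < eps.

Definition smul_continuous : Prop :=
  forall a0 x0 (eps : R), inK k a0 -> 0 < eps -> exists2 delta : R, 0 < delta &
    forall a x, inK k a -> qnorm (qsub a a0) < delta -> d x x0 < delta ->
      d (sm a x) (sm a0 x0) < eps.

Definition metric_vector_space : Prop :=
  [/\ is_metric, is_K_vector_space, add_continuous & smul_continuous].

Definition asymptotically_multiplicative : Prop :=
  forall C1 : R, 1 < C1 -> exists C2 : R, exists C3 : R,
    [/\ 0 <= C2, 0 <= C3 &
    forall a x y, inK k a ->
      C1^-1 * qnorm a * d x y - C2 * qnorm a - C3 <= d (sm a x) (sm a y) /\
      d (sm a x) (sm a y) <= C1 * qnorm a * d x y + C2 * qnorm a + C3].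

Definition is_K_subspace (F : set E) : Prop :=
  [/\ F 0, forall x y, F x -> F y -> F (x + y) &
      forall a x, inK k a -> F x -> F (sm a x)].

Definition unbounded_on_subspaces : Prop :=
  forall F : set E, is_K_subspace F -> (exists x, F x /\ x <> 0) ->
    forall M : R, exists x y, [/\ F x, F y & M < d x y].

Definition sum_condition : Prop :=
  forall C1 : R, 1 < C1 -> exists2 C0 : R, 0 <= C0 &
    forall n : nat, (2 <= n)%N -> forall xs ys : 'I_n -> E,
      d (\sum_(i < n) xs i) (\sum_(i < n) ys i)
        <= C1 * (\sum_(i < n) d (xs i) (ys i)) + n%:R * C0.

Definition d0 (mu : {measure set (quat R) -> \bar R}) (x y : E) : R :=
  fine (\int[mu]_(u in Uset k) (d (sm u x) (sm u y))%:E)%E.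
End MetricVS.

From mathcomp Require Import all_boot all_order all_algebra all_classical all_reals all_analysis.
From mathcomp Require Import measurable_realfun ring lra.
Import Order.TTheory GRing.Theory Num.Theory numFieldNormedType.Exports.
Local Open Scope ring_scope.
Local Open Scope classical_set_scope.

(* Write a n := d (n x) (n y).  The sum condition applied to q copies of
   (m x, m y) and one copy of (r x, r y) gives
   a (q m + r) <= C (q a m + a r) + (q + 1) C0 for every C > 1, and asymptotic
   multiplicativity gives a n = O(n).  Fekete's argument, run with C close
   enough to 1, shows that a n / n converges.  For |u| = 1, asymptotic
   multiplicativity also traps d (u z) (u w) between C^-1 d z w - K and
   C d z w + K, and integrating against the probability mu on U traps d0 z w
   between the same bounds; hence d0 (n x) (n y) / n has the same limit. *)

Lemma near_infty_div_natr_le (R : realType) (K e : R) : 0 < e ->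
  \forall n \near \oo, K / n%:R <= e.
Proof.
move=> e0; apply: filterS2 (nbhs_infty_gt 0) (nbhs_infty_ger (K / e)) => n n0.
by rewrite [in X in X -> _]ler_pdivrMr // ler_pdivrMr ?ltr0n // mulrC.
Qed.

Section QuasiSubadditive.
Context {R : realType}.

Definition quasi_subadditive (a : nat -> R) (C C0 : R) :=
  forall m q r, (0 < q)%N -> (r < m)%N ->
    a (q * m + r)%N <= C * (q%:R * a m + a r) + q.+1%:R * C0.

Context {a : nat -> R} {B : R}.
Hypothesis a_ge0 : forall n, 0 <= a n.
Hypothesis a_le : forall n, a n <= B * n.+1%:R.

Let B_ge0 : 0 <= B.
Proof. by have := le_trans (a_ge0 0) (a_le 0); rewrite mulr1. Qed.

Lemma avg_ge0 n : 0 <= n%:R^-1 * a n.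
Proof. by rewrite mulr_ge0 ?invr_ge0. Qed.

Lemma avg_le n : (0 < n)%N -> n%:R^-1 * a n <= 2 * B.
Proof.
move=> n0; have n1 : 0 <= n%:R - 1 :> R by rewrite subr_ge0 ler1n.
have := a_le n; rewrite -addn1 natrD ler_pdivrMl ?ltr0n //.
have := mulr_ge0 B_ge0 n1; lra.
Qed.

Lemma avg_le_quasi_subadditive {C C0 m n} : 0 <= C -> 0 <= C0 ->
  quasi_subadditive a C C0 -> (0 < m)%N -> (m <= n)%N ->
  n%:R^-1 * a n <= C * (m%:R^-1 * a m) + C0 / m%:R + (C * B * m%:R + C0) / n%:R.
Proof.
move=> C_ge0 C0_ge0 Csub m0 mn; have n0 : (0 < n)%N := leq_trans m0 mn.
set q := (n %/ m)%N; set r := (n %% m)%N.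
have := Csub m q r; rewrite -divn_eq divn_gt0 // ltn_pmod // => /(_ mn isT) an_le.
have qm_le : q%:R * m%:R <= n%:R :> R by rewrite -natrM ler_nat leq_trunc_div.
have ar_le : a r <= B * m%:R.
  by apply: (le_trans (a_le r)); rewrite ler_wpM2l // ler_nat ltn_pmod.
have qnV : q%:R * n%:R^-1 <= m%:R^-1 :> R.
  by rewrite ler_pdivrMr ?ltr0n // mulrC ler_pdivlMr ?ltr0n.
have iN_ge0 : 0 <= n%:R^-1 :> R by rewrite invr_ge0.
have {}an_le : n%:R^-1 * a n
    <= C * (q%:R / n%:R * a m) + C0 * (q%:R / n%:R) + (C * a r + C0) / n%:R.
  apply: le_trans (ler_wpM2l iN_ge0 an_le) _.
  by rewrite -addn1 natrD le_eqVlt; apply/orP; left; apply/eqP; ring.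
apply: le_trans an_le _; apply: lerD; first apply: lerD.
- by rewrite ler_wpM2l // ler_wpM2r.
- by rewrite ler_wpM2l.
- by rewrite ler_wpM2r // lerD2r -mulrA ler_wpM2l.
Qed.

Hypothesis a_quasi_subadditive :
  forall C, 1 < C -> exists2 C0, 0 <= C0 & quasi_subadditive a C C0.

Lemma cvg_avg_quasi_subadditive : cvg ((fun n => n%:R^-1 * a n) @ \oo).
Proof.
apply/cauchy_cvgP/cauchyP => eps eps_gt0; set e := eps / 4.
have e_gt0 : 0 < e by rewrite divr_gt0.
pose C := 1 + e / (2 * B + 1).
have C_gt1 : 1 < C by rewrite ltrDl divr_gt0 // ltr_wpDl ?mulr_ge0.
have avg_C m : (0 < m)%N -> C * (m%:R^-1 * a m) <= m%:R^-1 * a m + e.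
  move=> m_gt0; rewrite mulrDl mul1r lerD2l mulrAC ler_pdivrMr ?ltr_wpDl ?mulr_ge0 //.
  by rewrite ler_pM2l // ler_wpDr // avg_le.
have [C0 C0_ge0 Csub] := a_quasi_subadditive _ C_gt1.
have [m0 _ m0P] : \forall m \near \oo, (0 < m)%N /\ C0 / m%:R <= e.
  by apply/near_andP; split; [exact: nbhs_infty_gt | exact: near_infty_div_natr_le].
pose A := [set n%:R^-1 * a n | n in [set n | (m0 <= n)%N]].
have A_inf : has_inf A.
  split; first by exists (m0%:R^-1 * a m0), m0 => /=.
  by exists 0 => _ [n _ <-]; exact: avg_ge0.
have [_ [m m0m <-] am_lt] := inf_adherent e_gt0 A_inf.
have [m_gt0 C0m_le] := m0P m m0m.
exists (inf A + 2 * e).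
change (\forall n \near \oo, ball (inf A + 2 * e) eps (n%:R^-1 * a n)).
near=> n.
have mn : (m <= n)%N by near: n; exact: nbhs_infty_ge.
have Kn_le : (C * B * m%:R + C0) / n%:R <= e by near: n; exact: near_infty_div_natr_le.
have inf_le : inf A <= n%:R^-1 * a n.
  by apply: ge_inf; [exact: A_inf.2 | exists n => //; exact: leq_trans mn].
have le_inf : n%:R^-1 * a n <= inf A + 4 * e.
  have := avg_le_quasi_subadditive (ltW (lt_trans ltr01 C_gt1)) C0_ge0 Csub m_gt0 mn.
  have := avg_C m m_gt0; lra.
have eps_4e : eps = 4 * e by rewrite /e; field.
rewrite /ball /= ltr_norml; apply/andP; split; lra.
Unshelve. all: by end_near. Qed.

End QuasiSubadditive.

Lemma cvg_avg_quasi_equivalent (R : realType) (a c : nat -> R) (l : R) :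
  (forall n, 0 <= a n) -> (fun n => n%:R^-1 * a n) @ \oo --> l ->
  (forall C, 1 < C -> exists K, forall n, C^-1 * a n - K <= c n <= C * a n + K) ->
  (fun n => n%:R^-1 * c n) @ \oo --> l.
Proof.
move=> a_ge0 /cvgrPdist_le a_cvg a_c; apply/cvgrPdist_le => eps eps_gt0.
set e := eps / 3; have e_gt0 : 0 < e by rewrite divr_gt0.
pose C := 1 + e / (`|l| + 1).
have C_gt1 : 1 < C by rewrite ltrDl divr_gt0 // ltr_wpDl.
have C_inv : 1 - C^-1 <= C - 1.
  have C_gt0 : 0 < C := lt_trans ltr01 C_gt1.
  rewrite -[X in _ <= X]mulr1 (_ : 1 - C^-1 = (C - 1) * C^-1); last by field; rewrite gt_eqF.
  by apply: ler_wpM2l; rewrite ?subr_ge0 ?invf_le1 // ltW.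
have [K c_bounds] := a_c C C_gt1.
near=> n.
have a_near : `|l - n%:R^-1 * a n| <= e by near: n; exact: a_cvg.
have a_le : n%:R^-1 * a n <= `|l| + 1.
  near: n; apply: filterS (a_cvg 1 ltr01) => n.
  by rewrite distrC => /ler_distlDr /le_trans; apply; rewrite lerD2r ler_norm.
have K_le : K / n%:R <= e by near: n; exact: near_infty_div_natr_le.
have C_a_le : (C - 1) * (n%:R^-1 * a n) <= e.
  by rewrite addrAC subrr add0r mulrAC ler_pdivrMr ?ltr_wpDl // ler_pM2l.
have n_ge0 : 0 <= n%:R^-1 :> R by rewrite invr_ge0.
have /andP[c_lo c_hi] := c_bounds n.
have {c_lo}c_lo := ler_wpM2l n_ge0 c_lo; have {c_hi}c_hi := ler_wpM2l n_ge0 c_hi.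
have := ler_wpM2r (mulr_ge0 n_ge0 (a_ge0 n)) C_inv.
have eps_3e : eps = 3 * e by rewrite /e; field.
move: a_near; rewrite !ler_norml => /andP[a_lo a_hi] C_inv_a.
apply/andP; split; lra.
Unshelve. all: by end_near. Qed.

Section IntegralBounds.
Context d (T : measurableType d) (R : realType) (mu : {measure set T -> \bar R}).
Local Open Scope ereal_scope.

(* The integrand of d0 need not be measurable; this is harmless because the
   integral of a nonnegative function is a supremum over simple functions. *)
Lemma ge0_le_integral_nonmeasurable (D : set T) (f g : T -> \bar R) :
  (forall x, D x -> 0 <= f x) -> (forall x, D x -> f x <= g x) ->
  \int[mu]_(x in D) f x <= \int[mu]_(x in D) g x.
Proof.
move=> f_ge0 fg; have g_ge0 x : D x -> 0 <= g x.
  by move=> Dx; exact: le_trans (f_ge0 x Dx) (fg x Dx).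
rewrite !ge0_integralE //; apply: ereal_sup_le => _ [h hf <-]; exists h => // x.
by apply: le_trans (hf x) _; apply: lee_restrict.
Qed.

Lemma fine_integral_bounds (D : set T) (f : T -> R) (lo hi : R) :
  measurable D -> mu D = 1 -> (forall x, D x -> 0 <= f x)%R ->
  (forall x, D x -> lo <= f x <= hi)%R ->
  (lo <= fine (\int[mu]_(x in D) (f x)%:E) <= hi)%R.
Proof.
move=> mD muD f_ge0 f_bounds; set I := \int[mu]_(x in D) _.
have int_cst (c : R) : \int[mu]_(x in D) (cst c%:E) x = c%:E.
  by rewrite integral_cst // muD mule1.
have I_le : I <= hi%:E.
  rewrite -int_cst; apply: ge0_le_integral_nonmeasurable => x Dx.
    by rewrite lee_fin f_ge0.
  by rewrite lee_fin; case/andP: (f_bounds x Dx).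
have le_I : (Num.max lo 0)%:E <= I.
  rewrite -int_cst; apply: ge0_le_integral_nonmeasurable => x Dx.
    by rewrite lee_fin le_max lexx orbT.
  by rewrite lee_fin ge_max f_ge0 // andbT; case/andP: (f_bounds x Dx).
have I_fin : I \is a fin_num.
  rewrite ge0_fin_numE; first exact: le_lt_trans I_le (ltry hi).
  by apply: le_trans le_I; rewrite lee_fin le_max lexx orbT.
move: I_le le_I; rewrite -(fineK I_fin) !lee_fin => I_le le_I.
by rewrite I_le andbT (le_trans _ le_I) // le_max lexx.
Qed.

End IntegralBounds.

Section Quaternions.
Context {R : realType}.

Lemma inK_qreal k (r : R) : inK k (qreal r).
Proof. by case: k. Qed.

Lemma qnorm_qreal (r : R) : qnorm (qreal r) = `|r|.
Proof.
by rewrite /qnorm /qc0 /qc1 /qc2 /qc3 /= expr0n /= !addr0 sqrtr_sqr.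
Qed.

Lemma qadd_qreal (r s : R) : qadd (qreal r) (qreal s) = qreal (r + s).
Proof. by rewrite /qadd /qc0 /qc1 /qc2 /qc3 /= addr0. Qed.

Lemma measurable_level (f : quat R -> R) (c : R) :
  measurable_fun setT f -> measurable [set u | f u = c].
Proof.
by move=> mf; rewrite -[X in measurable X]setTI; exact: mf measurableT _ (measurable_set1 c).
Qed.

Lemma measurable_Uset k : measurable (Uset k : set (quat R)).
Proof.
have mc0 : measurable_fun setT (@qc0 R).
  exact: measurableT_comp measurable_fst measurable_fst.
have mc1 : measurable_fun setT (@qc1 R).
  exact: measurableT_comp measurable_snd measurable_fst.
have mc2 : measurable_fun setT (@qc2 R).
  exact: measurableT_comp measurable_fst measurable_snd.
have mc3 : measurable_fun setT (@qc3 R).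
  exact: measurableT_comp measurable_snd measurable_snd.
have msq : measurable_fun setT
    (fun u : quat R => qc0 u ^+ 2 + qc1 u ^+ 2 + qc2 u ^+ 2 + qc3 u ^+ 2).
  by repeat apply: measurable_funD; apply: measurable_funX.
have mnorm : measurable_fun setT (@qnorm R).
  exact: measurableT_comp (continuous_measurable_fun (@sqrt_continuous R)) msq.
apply: measurableI; last exact: measurable_level.
case: k => /=; last exact: measurableT.
all: by repeat apply: measurableI; exact: measurable_level.
Qed.

End Quaternions.

Lemma sumr_ord_last_if (V : nmodType) (q : nat) (u v : V) :
  \sum_(i < q.+1) (if (i < q)%N then u else v) = u *+ q + v.
Proof.
rewrite big_ord_recr /= ltnn; congr (_ + _).
by rewrite (eq_bigr (fun=> u)) ?sumr_const ?card_ord // => i _; rewrite ltn_ord.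
Qed.

Section MetricVectorSpace.
Context {R : realType} {k : Kind} {E : zmodType}.
Context {sm : quat R -> E -> E} {d : E -> E -> R}.

Lemma metric_ge0 : is_metric d -> forall x y, 0 <= d x y.
Proof.
move=> [d_eq0 d_sym d_tri] x y; have := d_tri x y x.
by rewrite (proj2 (d_eq0 x x)) // d_sym -mulr2n pmulrn_lge0.
Qed.

Lemma sm_qreal_natr : is_K_vector_space k sm -> forall n z, sm (qreal n%:R) z = z *+ n.
Proof.
move=> [_ smD _ sm1] n z.
have sm_add r s : sm (qreal (r + s)) z = sm (qreal r) z + sm (qreal s) z.
  by rewrite -qadd_qreal smD //; apply: inK_qreal.
elim: n => [|n IHn]; last by rewrite -natr1 sm_add IHn sm1 mulrS addrC.
by apply/(@addrI _ (sm (qreal 0) z)); rewrite -sm_add !addr0.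
Qed.

Lemma dist_muln_le_linear : is_metric d -> is_K_vector_space k sm ->
  asymptotically_multiplicative k sm d ->
  forall x y, exists B, forall n, d (x *+ n) (y *+ n) <= B * n.+1%:R.
Proof.
move=> d_metric smV AM x y; have [C2 [C3 [C2_ge0 C3_ge0 AM2]]] := AM 2 (ltr1n _ 2).
exists (2 * d x y + C2 + C3) => n; have := (AM2 (qreal n%:R) x y (inK_qreal _ _)).2.
rewrite qnorm_qreal ger0_norm // !sm_qreal_natr // => /le_trans; apply.
have := mulr_ge0 C3_ge0 (ler0n R n); have := metric_ge0 d_metric x y.
rewrite -[n.+1]addn1 natrD; lra.
Qed.

Lemma dist_muln_quasi_subadditive : sum_condition d ->
  forall x y C, 1 < C -> exists2 C0, 0 <= C0 &
    quasi_subadditive (fun n => d (x *+ n) (y *+ n)) C C0.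
Proof.
move=> SC x y C C_gt1; have [C0 C0_ge0 SC_C] := SC C C_gt1.
exists C0 => // m q r q_gt0 _.
have := SC_C q.+1 q_gt0 (fun i => if (i < q)%N then x *+ m else x *+ r)
                        (fun i => if (i < q)%N then y *+ m else y *+ r).
rewrite !sumr_ord_last_if -!mulrnA -!mulrnDr (mulnC m).
rewrite (eq_bigr (fun i : 'I_q.+1 =>
  if (i < q)%N then d (x *+ m) (y *+ m) else d (x *+ r) (y *+ r))); last first.
  by move=> i _; case: ifP.
by rewrite sumr_ord_last_if -[d _ _ *+ q]mulr_natl.
Qed.

Lemma d0_quasi_equivalent {mu : {measure set (quat R) -> \bar R}} :
  is_metric d -> asymptotically_multiplicative k sm d -> mu (Uset k) = 1%E ->
  forall C, 1 < C -> exists K, forall z w,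
    C^-1 * d z w - K <= d0 k sm d mu z w <= C * d z w + K.
Proof.
move=> d_metric AM muU C C_gt1; have [C2 [C3 [_ _ AMC]]] := AM C C_gt1.
exists (C2 + C3) => z w.
apply: fine_integral_bounds (measurable_Uset _) muU _ _ => [u _|u [Ku u1]].
  exact: metric_ge0.
have [lo hi] := AMC u z w Ku; rewrite u1 !mulr1 in lo hi.
by apply/andP; split; lra.
Qed.

End MetricVectorSpace.

Theorem proposition8 (R : realType) (k : Kind) (E : zmodType)
    (sm : quat R -> E -> E) (d : E -> E -> R)
    (mu : {measure set (quat R) -> \bar R}) :
  metric_vector_space k sm d ->
  asymptotically_multiplicative k sm d ->
  unbounded_on_subspaces k sm d ->
  sum_condition d ->
  is_Haar_U k mu ->
  forall x y : E, exists l : R,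
    (fun n : nat => n%:R^-1 * d0 k sm d mu (sm (qreal n%:R) x) (sm (qreal n%:R) y))
      @ \oo --> l.
Proof.
move=> [d_metric smV _ _] AM _ SC [_ muU _] x y.
pose a n := d (x *+ n) (y *+ n).
have [B a_le] := dist_muln_le_linear d_metric smV AM x y.
have a_cvg := cvg_avg_quasi_subadditive (fun n => metric_ge0 d_metric _ _) a_le
  (dist_muln_quasi_subadditive SC x y).
exists (lim ((fun n => n%:R^-1 * a n) @ \oo)).
under eq_fun => n do rewrite !(sm_qreal_natr smV).
apply: cvg_avg_quasi_equivalent (fun n => metric_ge0 d_metric _ _) a_cvg _ => C C_gt1.
have [K d0_near] := d0_quasi_equivalent d_metric AM muU _ C_gt1.
by exists K => n; exact: d0_near.
Qed.
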